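(* Let $\mathcal A=(S,R_0)$ be an argumentation network with joint attacks, where $S\neq\varnothing$ and $R_0\subseteq(2^S\setminus\{\varnothing\})\times S$, such that every $x\in S$ is attacked by finitely many sets $G$ (with $GR_0x$) and every such $G$ is finite. Regard the elements of $S$ as atoms of $\mathbf{CN}$ and let $\Delta_{\mathcal A}$ consist of the following formulas for every $x\in S$: $$(\textstyle\bigvee_{GR_0x}\bigwedge_{z\in G}z)\to Nx,\qquad x\leftrightarrow \bigwedge_{GR_0x}\bigvee_{z\in G}Nz,$$ $$\textstyle\bigwedge_{GR_0x}(\bigvee_{z\in G}\neg z)\wedge\bigl(\bigvee_{GR_0x}\bigwedge_{z\in G}(z\vee\neg Nz)\bigr)\to\neg x\wedge\neg Nx$$ (empty conjunction $\top$, empty disjunction $\bot$). Then the $\mathbf{CN}$-models of $\Delta_{\mathcal A}$ correspond exactly to the legitimate Caminada–Gabbay labellings of $\mathcal A$: for every $\mathbf{CN}$-model $h$ of $\Delta_{\mathcal A}$, the map $\lambda_h$ with $\lambda_h(x)=\mathrm{in}$ if $h(x)=1$, $\mathrm{out}$ if $h(Nx)=1$, $\mathrm{und}$ if $h(x)=h(Nx)=0$ is a legitimate Caminada–Gabbay labelling; and for every legitimate Caminada–Gabbay labelling $\lambda$, the assignment $h_\lambda$ with $h_\lambda(x)=1$ iff $\lambda(x)=\mathrm{in}$ and $h_\lambda(Nx)=1$ iff $\lambda(x)=\mathrm{out}$ is a $\mathbf{CN}$-model of $\Delta_{\mathcal A}$.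
   Context: The logic $\mathbf{CN}$: atomic formulas are $q$ and $Nq$ for basic atoms $q$; formulas use classical connectives; a $\mathbf{CN}$-model is a classical $\{0,1\}$-assignment $h$ to all atoms $q,Nq$ with $h(Nq)=1\Rightarrow h(q)=0$, with classical satisfaction. A legitimate Caminada–Gabbay labelling of $(S,R_0)$ is $\lambda:S\to\{\mathrm{in},\mathrm{out},\mathrm{und}\}$ such that for each $x$: (CG1) $\lambda(x)=\mathrm{in}$ iff either $x$ is attacked by no $G$, or for every $G$ with $GR_0x$ there is $y\in G$ with $\lambda(y)=\mathrm{out}$; (CG2) $\lambda(x)=\mathrm{out}$ iff for some $G$ with $GR_0x$, all $y\in G$ have $\lambda(y)=\mathrm{in}$; (CG3) $\lambda(x)=\mathrm{und}$ iff for every $G$ with $GR_0x$ there is $y\in G$ with $\lambda(y)\neq\mathrm{in}$, and for some $G'$ with $G'R_0x$ every $y\in G'$ has $\lambda(y)\in\{\mathrm{in},\mathrm{und}\}$. *)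

From Stdlib Require Import List Bool.
Import ListNotations.

Inductive cnatom (S : Type) : Type :=
| Pos : S -> cnatom S
| NAt : S -> cnatom S.
Arguments Pos {S} _.
Arguments NAt {S} _.

Inductive form (S : Type) : Type :=
| FAt : cnatom S -> form S
| FTop : form S
| FBot : form S
| FNeg : form S -> form S
| FAnd : form S -> form S -> form S
| FOr : form S -> form S -> form S
| FImp : form S -> form S -> form S
| FIff : form S -> form S -> form S.
Arguments FAt {S} _.
Arguments FTop {S}.
Arguments FBot {S}.
Arguments FNeg {S} _.
Arguments FAnd {S} _ _.
Arguments FOr {S} _ _.
Arguments FImp {S} _ _.
Arguments FIff {S} _ _.

Definition BigAnd {S A : Type} (l : list A) (f : A -> form S) : form S :=
  fold_right (fun a acc => FAnd (f a) acc) FTop l.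
Definition BigOr {S A : Type} (l : list A) (f : A -> form S) : form S :=
  fold_right (fun a acc => FOr (f a) acc) FBot l.

Fixpoint sat {S : Type} (h : cnatom S -> bool) (f : form S) : Prop :=
  match f with
  | FAt a => h a = true
  | FTop => True
  | FBot => False
  | FNeg g => ~ sat h g
  | FAnd g k => sat h g /\ sat h k
  | FOr g k => sat h g \/ sat h k
  | FImp g k => sat h g -> sat h k
  | FIff g k => sat h g <-> sat h k
  end.

Definition CN_assignment {S : Type} (h : cnatom S -> bool) : Prop :=
  forall q, h (NAt q) = true -> h (Pos q) = false.

Definition models {S : Type} (h : cnatom S -> bool) (Delta : form S -> Prop) : Prop :=
  forall f, Delta f -> sat h f.

Definition CN_model_of {S : Type} (h : cnatom S -> bool) (Delta : form S -> Prop) : Prop :=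
  CN_assignment h /\ models h Delta.

(* att x : a finite list enumerating the (finite) attacking sets G with G R0 x,
   each G given by a finite list of its elements. *)
Definition atomP {S} (z : S) : form S := FAt (Pos z).
Definition atomN {S} (z : S) : form S := FAt (NAt z).

Definition Delta1 {S} (att : S -> list (list S)) (x : S) : form S :=
  FImp (BigOr (att x) (fun G => BigAnd G atomP)) (atomN x).
Definition Delta2 {S} (att : S -> list (list S)) (x : S) : form S :=
  FIff (atomP x) (BigAnd (att x) (fun G => BigOr G atomN)).
Definition Delta3 {S} (att : S -> list (list S)) (x : S) : form S :=
  FImp (FAnd (BigAnd (att x) (fun G => BigOr G (fun z => FNeg (atomP z))))
             (BigOr (att x) (fun G => BigAnd G (fun z => FOr (atomP z) (FNeg (atomN z))))))
       (FAnd (FNeg (atomP x)) (FNeg (atomN x))).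

Definition DeltaA {S} (att : S -> list (list S)) : form S -> Prop :=
  fun f => exists x, f = Delta1 att x \/ f = Delta2 att x \/ f = Delta3 att x.

Inductive label := lin | lout | lund.

(* Legitimate Caminada–Gabbay labelling of (S, R0), R0 G x meaning G R0 x. *)
Definition CG_legit {S : Type} (R0 : (S -> Prop) -> S -> Prop) (lam : S -> label) : Prop :=
  forall x,
    (lam x = lin <->
       ((~ exists G, R0 G x) \/
        (forall G, R0 G x -> exists y, G y /\ lam y = lout))) /\
    (lam x = lout <->
       (exists G, R0 G x /\ forall y, G y -> lam y = lin)) /\
    (lam x = lund <->
       ((forall G, R0 G x -> exists y, G y /\ lam y <> lin) /\
        (exists G', R0 G' x /\ forall y, G' y -> (lam y = lin \/ lam y = lund)))).

Definition lambda_of {S} (h : cnatom S -> bool) : S -> label :=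
  fun x => if h (Pos x) then lin else if h (NAt x) then lout else lund.

Definition h_of {S} (lam : S -> label) : cnatom S -> bool :=
  fun a => match a with
           | Pos x => match lam x with lin => true | _ => false end
           | NAt x => match lam x with lout => true | _ => false end
           end.

From Stdlib Require Import List Classical Setoid.

(** A Boolean assignment [h] that reads [x] as "in" and [Nx] as "out" turns
    the three formulas of [DeltaA] at an argument [x] into the statements
    - if some attacker of [x] is all in, then [x] is out;
    - [x] is in iff every attacker of [x] has an out member;
    - if every attacker has a non-in member and some attacker is all in-or-und,
      then [x] is und.
    Since a labelling takes exactly three values, "every attacker has a non-in
    member" is the negation of "some attacker is all in", and "some attacker
    is all in-or-und" that of "every attacker has an out member".  With these
    two dualities the three implications are classically equivalent to the
    three biconditionals of Caminada and Gabbay.  The theorem follows because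
    a CN-model and its labelling determine each other. *)

Lemma sat_BigAnd {S A : Type} (h : cnatom S -> bool) (l : list A) (f : A -> form S) :
  sat h (BigAnd l f) <-> forall a, In a l -> sat h (f a).
Proof.
  induction l as [|b l IH]; simpl.
  - split; [intros _ a []|auto].
  - rewrite IH. split.
    + intros [Hb Hl] a [<-|Ha]; auto.
    + intros H; split; auto.
Qed.

Lemma sat_BigOr {S A : Type} (h : cnatom S -> bool) (l : list A) (f : A -> form S) :
  sat h (BigOr l f) <-> exists a, In a l /\ sat h (f a).
Proof.
  induction l as [|b l IH]; simpl.
  - split; [intros []|intros [a [[] _]]].
  - rewrite IH. split.
    + intros [H|[a [Ha H]]]; eauto.
    + intros [a [[<-|Ha] H]]; eauto.
Qed.

Lemma label_lin_or_lund (v : label) : v = lin \/ v = lund <-> v <> lout.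
Proof. destruct v; intuition discriminate. Qed.

Lemma label_lin_or_not_lout (v : label) : v = lin \/ v <> lout <-> v = lin \/ v = lund.
Proof. destruct v; intuition discriminate. Qed.

Lemma label_not_lin_not_lout (v : label) : v <> lin /\ v <> lout <-> v = lund.
Proof. destruct v; intuition discriminate. Qed.

Lemma label_conditions_iff (v : label) (A B C D : Prop) :
  (C <-> ~ A) -> (D <-> ~ B) ->
  ((A -> v = lout) /\ (v = lin <-> B) /\ (C /\ D -> v = lund)) <->
  ((v = lin <-> B) /\ (v = lout <-> A) /\ (v = lund <-> C /\ D)).
Proof.
  intros hC hD. split.
  - intros [hA [hB hCD]].
    assert (hD' : v <> lin -> D) by (intros nin; apply hD; intros b; apply nin, hB, b).
    split; [exact hB|split; split; [|exact hA| |exact hCD]].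
    + intros vout. apply NNPP. intros nA.
      assert (v = lund) by (apply hCD; split; [apply hC, nA|apply hD'; congruence]).
      congruence.
    + intros vund. split; [|apply hD'; congruence].
      apply hC. intros a. apply hA in a. congruence.
  - intros [hB [hA hCD]]. split; [apply hA|split; [exact hB|apply hCD]].
Qed.

Lemma not_ex_or_forall {T : Type} (R Q : T -> Prop) :
  (~ exists a, R a) \/ (forall a, R a -> Q a) <-> (forall a, R a -> Q a).
Proof.
  split; [|tauto].
  intros [H|H] a Ra; [exfalso; eauto|auto].
Qed.

Section Attackers.
Variables (S : Type) (att : S -> list (list S)).

Definition attacked_within (P : S -> Prop) (x : S) : Prop :=
  exists l, In l (att x) /\ forall y, In y l -> P y.

Definition attackers_meet (P : S -> Prop) (x : S) : Prop :=
  forall l, In l (att x) -> exists y, In y l /\ P y.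

Lemma attacked_within_ext (P Q : S -> Prop) (x : S) :
  (forall y, P y <-> Q y) -> attacked_within P x <-> attacked_within Q x.
Proof.
  intros PQ. unfold attacked_within. setoid_rewrite PQ. reflexivity.
Qed.

Lemma attackers_meet_not (P : S -> Prop) (x : S) :
  attackers_meet (fun y => ~ P y) x <-> ~ attacked_within P x.
Proof.
  split.
  - intros H [l [Hl Hall]]. destruct (H l Hl) as [y [Hy nPy]]. auto.
  - intros H l Hl. apply NNPP. intros nex. apply H. exists l. split; [exact Hl|].
    intros y Hy. apply NNPP. intros nPy. eauto.
Qed.

Lemma attacked_within_not (P : S -> Prop) (x : S) :
  attacked_within (fun y => ~ P y) x <-> ~ attackers_meet P x.
Proof.
  split.
  - intros [l [Hl Hall]] H. destruct (H l Hl) as [y [Hy Py]]. exact (Hall y Hy Py).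
  - intros H. apply NNPP. intros nex. apply H. intros l Hl. apply NNPP. intros nmeet.
    apply nex. exists l. split; [exact Hl|]. intros y Hy Py. eauto.
Qed.

Definition CG_legit_at (lam : S -> label) (x : S) : Prop :=
  (lam x = lin <-> attackers_meet (fun y => lam y = lout) x) /\
  (lam x = lout <-> attacked_within (fun y => lam y = lin) x) /\
  (lam x = lund <-> attackers_meet (fun y => lam y <> lin) x /\
                    attacked_within (fun y => lam y = lin \/ lam y = lund) x).

Section Attacks.
Variable R0 : (S -> Prop) -> S -> Prop.
Hypothesis Hatt : forall G x, R0 G x <->
  exists2 l, In l (att x) & (forall z, G z <-> In z l).

Lemma R0_attacked_within (P : S -> Prop) (x : S) :
  (exists G, R0 G x /\ forall y, G y -> P y) <-> attacked_within P x.
Proof.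
  split.
  - intros [G [HG H]]. apply Hatt in HG. destruct HG as [l Hl HGl].
    exists l. split; [exact Hl|]. intros y Hy. apply H, HGl, Hy.
  - intros [l [Hl H]]. exists (fun z => In z l). split; [|exact H].
    apply Hatt. exists l; tauto.
Qed.

Lemma R0_attackers_meet (P : S -> Prop) (x : S) :
  (forall G, R0 G x -> exists y, G y /\ P y) <-> attackers_meet P x.
Proof.
  split.
  - intros H l Hl. apply H, Hatt. exists l; tauto.
  - intros H G HG. apply Hatt in HG. destruct HG as [l Hl HGl].
    destruct (H l Hl) as [y [Hy Py]]. exists y. split; [apply HGl, Hy|exact Py].
Qed.

Lemma CG_legit_iff (lam : S -> label) :
  CG_legit R0 lam <-> forall x, CG_legit_at lam x.
Proof.
  unfold CG_legit, CG_legit_at.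
  setoid_rewrite not_ex_or_forall.
  setoid_rewrite R0_attackers_meet.
  setoid_rewrite R0_attacked_within.
  reflexivity.
Qed.

End Attacks.

Section Semantics.
Variables (h : cnatom S -> bool) (lam : S -> label).
Hypothesis h_Pos : forall z, h (Pos z) = true <-> lam z = lin.
Hypothesis h_NAt : forall z, h (NAt z) = true <-> lam z = lout.

Lemma sat_Delta1 (x : S) :
  sat h (Delta1 att x) <-> (attacked_within (fun y => lam y = lin) x -> lam x = lout).
Proof.
  unfold Delta1, atomP, atomN, attacked_within; simpl.
  rewrite sat_BigOr, h_NAt. setoid_rewrite sat_BigAnd. simpl.
  setoid_rewrite h_Pos. reflexivity.
Qed.

Lemma sat_Delta2 (x : S) :
  sat h (Delta2 att x) <-> (lam x = lin <-> attackers_meet (fun y => lam y = lout) x).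
Proof.
  unfold Delta2, atomP, atomN, attackers_meet; simpl.
  rewrite sat_BigAnd, h_Pos. setoid_rewrite sat_BigOr. simpl.
  setoid_rewrite h_NAt. reflexivity.
Qed.

Lemma sat_Delta3 (x : S) :
  sat h (Delta3 att x) <->
  (attackers_meet (fun y => lam y <> lin) x /\
   attacked_within (fun y => lam y = lin \/ lam y = lund) x -> lam x = lund).
Proof.
  unfold Delta3, atomP, atomN, attackers_meet, attacked_within; simpl.
  rewrite sat_BigAnd, sat_BigOr. setoid_rewrite sat_BigOr. setoid_rewrite sat_BigAnd.
  simpl. setoid_rewrite h_Pos. setoid_rewrite h_NAt.
  setoid_rewrite label_lin_or_not_lout. rewrite label_not_lin_not_lout. reflexivity.
Qed.

Lemma sat_Deltas_iff (x : S) :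
  sat h (Delta1 att x) /\ sat h (Delta2 att x) /\ sat h (Delta3 att x) <->
  CG_legit_at lam x.
Proof.
  rewrite sat_Delta1, sat_Delta2, sat_Delta3. apply label_conditions_iff.
  - apply attackers_meet_not.
  - rewrite (attacked_within_ext _ (fun y => ~ lam y = lout)) by (intros y; apply label_lin_or_lund).
    apply attacked_within_not.
Qed.

Lemma models_DeltaA_iff : models h (DeltaA att) <-> forall x, CG_legit_at lam x.
Proof.
  setoid_rewrite <- sat_Deltas_iff. unfold models, DeltaA. split.
  - intros H x. split; [|split]; apply H; exists x; auto.
  - intros H f [x [-> | [-> | ->]]]; destruct (H x) as [D1 [D2 D3]]; assumption.
Qed.

End Semantics.
End Attackers.

Lemma CN_assignment_h_of {S : Type} (lam : S -> label) : CN_assignment (h_of lam).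
Proof. intros q; simpl. destruct (lam q); congruence. Qed.

Lemma h_of_Pos {S : Type} (lam : S -> label) (z : S) : h_of lam (Pos z) = true <-> lam z = lin.
Proof. simpl. destruct (lam z); intuition discriminate. Qed.

Lemma h_of_NAt {S : Type} (lam : S -> label) (z : S) : h_of lam (NAt z) = true <-> lam z = lout.
Proof. simpl. destruct (lam z); intuition discriminate. Qed.

Lemma lambda_of_Pos {S : Type} (h : cnatom S -> bool) (z : S) :
  h (Pos z) = true <-> lambda_of h z = lin.
Proof. unfold lambda_of. destruct (h (Pos z)), (h (NAt z)); intuition discriminate. Qed.

Lemma lambda_of_NAt {S : Type} (h : cnatom S -> bool) (z : S) :
  CN_assignment h -> h (NAt z) = true <-> lambda_of h z = lout.
Proof.
  intros HCN. specialize (HCN z). unfold lambda_of.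
  destruct (h (Pos z)), (h (NAt z)); intuition discriminate.
Qed.

Theorem theorem20 (S : Type) (R0 : (S -> Prop) -> S -> Prop)
  (att : S -> list (list S))
  (HS : inhabited S)
  (Hnonempty : forall G x, R0 G x -> exists z, G z)
  (Hatt : forall G x, R0 G x <->
            exists2 l, In l (att x) & (forall z, G z <-> In z l)) :
  (forall h : cnatom S -> bool,
      CN_model_of h (DeltaA att) -> CG_legit R0 (lambda_of h)) /\
  (forall lam : S -> label,
      CG_legit R0 lam -> CN_model_of (h_of lam) (DeltaA att)).
Proof.
  split.
  - intros h [HCN Hmod].
    apply (CG_legit_iff S att R0 Hatt).
    apply (models_DeltaA_iff S att h (lambda_of h)); [| |exact Hmod].
    + apply lambda_of_Pos.
    + intros z. apply lambda_of_NAt, HCN.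
  - intros lam Hleg. split; [apply CN_assignment_h_of|].
    apply (models_DeltaA_iff S att (h_of lam) lam); [apply h_of_Pos|apply h_of_NAt|].
    apply (CG_legit_iff S att R0 Hatt), Hleg.
Qed.
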